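(* Let $h>0$ and $\mathbb{T}:=\{0,h,2h,\ldots\}$. Let $p_0,p_1\in\mathbb{C}\setminus\{-\tfrac{1}{h}\}$ with $p_0\ne p_1$ and $0<|1+hp_0||1+hp_1|\ne 1$, and define $p:\mathbb{T}\to\mathbb{C}$ by $p(t)=p_0$ if $\tfrac{t}{h}$ is even and $p(t)=p_1$ if $\tfrac{t}{h}$ is odd. Then the equation $\Delta_h x(t)-p(t)x(t)=0$, $t\in\mathbb{T}$, where $\Delta_hx(t):=\frac{x(t+h)-x(t)}{h}$, has Ulam stability on $\mathbb{T}$ with Ulam stability constant $$K_0:=h\max\left\{\frac{1+|1+hp_0|}{\big|1-|1+hp_0||1+hp_1|\big|},\ \frac{1+|1+hp_1|}{\big|1-|1+hp_0||1+hp_1|\big|}\right\}.$$ Moreover, if $|1+hp_0||1+hp_1|>1$, then $K_0$ is the minimum Ulam stability constant for this equation.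
   Context: A constant $K>0$ is an Ulam stability constant for the equation on $\mathbb{T}$ if for every $\varepsilon>0$ and every $\phi:\mathbb{T}\to\mathbb{C}$ with $|\Delta_h\phi(t)-p(t)\phi(t)|\le\varepsilon$ for all $t\in\mathbb{T}$, there exists a solution $x:\mathbb{T}\to\mathbb{C}$ of the equation with $|\phi(t)-x(t)|\le K\varepsilon$ for all $t\in\mathbb{T}$; the equation has Ulam stability if such $K$ exists. ''Minimum'' means no positive number smaller than $K_0$ is an Ulam stability constant. *)

From Stdlib Require Import Reals.
From Coquelicot Require Import Coquelicot.
Open Scope R_scope.

(* The time scale T = {0, h, 2h, ...} is identified with nat via n |-> n*h;
   a function on T is thus a sequence nat -> C, and t = n*h. *)

Definition p_per (p0 p1 : C) (n : nat) : C :=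
  if Nat.even n then p0 else p1.

Definition delta_h (h : R) (x : nat -> C) (n : nat) : C :=
  Cdiv (Cminus (x (S n)) (x n)) (RtoC h).

Definition ulam_constant (h : R) (p : nat -> C) (K : R) : Prop :=
  0 < K /\
  forall eps : R, 0 < eps ->
  forall phi : nat -> C,
    (forall n, Cmod (Cminus (delta_h h phi n) (Cmult (p n) (phi n))) <= eps) ->
    exists x : nat -> C,
      (forall n, Cminus (delta_h h x n) (Cmult (p n) (x n)) = RtoC 0) /\
      (forall n, Cmod (Cminus (phi n) (x n)) <= K * eps).

Definition K0 (h : R) (p0 p1 : C) : R :=
  let a0 := Cmod (Cplus (RtoC 1) (Cmult (RtoC h) p0)) in
  let a1 := Cmod (Cplus (RtoC 1) (Cmult (RtoC h) p1)) in
  h * Rmax ((1 + a0) / Rabs (1 - a0 * a1)) ((1 + a1) / Rabs (1 - a0 * a1)).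

From Stdlib Require Import Reals Lra Lia.
From Coquelicot Require Import Coquelicot.
Open Scope R_scope.

(* With a := 1 + h p the equation reads x(n+1) = a(n) x(n), and an approximate solution phi
   differs from a solution x by some e with e(n+1) = a(n) e(n) + f(n), |f| <= h eps, where e(0)
   may be chosen freely.  Over one period the even terms obey E(k+1) = a0 a1 E(k) + g(k) with
   |g| <= (1 + |a1|) h eps.  If |a0 a1| < 1 start from E(0) = 0; if |a0 a1| > 1 take the
   bounded orbit E(k) = - sum_j g(k+j) (a0 a1)^-(j+1).  In both cases
   |E| <= (1 + |a1|) h eps / |1 - |a0 a1||, and the odd terms are bounded through the
   neighbouring even ones.  When |a0 a1| > 1 the only bounded solution is 0, so the perturbation
   of modulus alternating between the two bounds that follows the phase of the solutions shows
   that no smaller constant works. *)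

Lemma is_series_norm_le {K : AbsRing} {V : NormedModule K} (a : nat -> V) (b : nat -> R) la lb :
  is_series a la -> is_series b lb -> (forall n, norm (a n) <= b n) -> norm la <= lb.
Proof.
  intros Ha Hb Hab.
  assert (Hna : is_lim_seq (fun n => norm (sum_n a n)) (norm la)).
  { eapply filterlim_comp; [exact Ha | apply filterlim_norm]. }
  assert (Hnb : is_lim_seq (sum_n b) lb) by exact Hb.
  refine (is_lim_seq_le _ _ (norm la) lb _ Hna Hnb).
  intros n. eapply Rle_trans; [apply norm_sum_n_m | apply sum_n_m_le, Hab].
Qed.

Section AffineRecurrence.

Variables (q : C) (g : nat -> C) (B : R).
Hypothesis g_bounded : forall k, Cmod (g k) <= B.

Definition affine_rec (y : nat -> C) : Prop := forall k, (y (S k) = q * y k + g k)%C.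

Lemma affine_rec_bounded_contractive (y : nat -> C) :
  Cmod q < 1 -> y 0%nat = 0 -> affine_rec y -> forall k, Cmod (y k) <= B / (1 - Cmod q).
Proof.
  intros Hq y0 Hy k.
  assert (Hq0 : 0 <= Cmod q) by apply Cmod_ge_0.
  apply Rle_div_r; [lra|].
  induction k as [|k IH].
  - rewrite y0, Cmod_0. pose proof (Rle_trans _ _ _ (Cmod_ge_0 (g 0%nat)) (g_bounded 0)). lra.
  - rewrite Hy.
    pose proof (Cmod_triangle (q * y k) (g k)) as Htri. rewrite Cmod_mult in Htri.
    pose proof (g_bounded k). pose proof (Cmod_ge_0 (y k)). nra.
Qed.

Lemma affine_rec_bounded_expansive :
  1 < Cmod q -> exists c, forall y, y 0%nat = c -> affine_rec y ->
  forall k, Cmod (y k) <= B / (Cmod q - 1).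
Proof.
  intros Hq.
  set (w := (/ q)%C).
  assert (q_neq0 : q <> 0%C) by (intros E; rewrite E, Cmod_0 in Hq; lra).
  assert (Hw : Cmod w = / Cmod q) by (unfold w; rewrite Cmod_inv; auto).
  (* The bounded orbit is y k = - sum_j term k j; its value at 0 is the required c. *)
  set (term k j := (g (k + j)%nat * w ^ S j)%C).
  set (dom j := Cmod w ^ j * (B * Cmod w)).
  assert (Hw1 : 0 <= Cmod w < 1).
  { rewrite Hw. split; [left; apply Rinv_0_lt_compat; lra|].
    rewrite <- Rinv_1. apply Rinv_lt_contravar; lra. }
  assert (Hdom : is_series dom (B / (Cmod q - 1))).
  { replace (B / (Cmod q - 1)) with (/ (1 - Cmod w) * (B * Cmod w))
      by (rewrite Hw; field; lra).
    apply is_series_scal_r, is_series_geom. rewrite Rabs_pos_eq; lra. }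
  assert (Hterm : forall k j, Cmod (term k j) <= dom j).
  { intros k j. unfold term, dom. rewrite Cmod_mult, Cmod_pow, <- tech_pow_Rmult.
    replace (Cmod w ^ j * (B * Cmod w)) with (B * (Cmod w * Cmod w ^ j)) by ring.
    apply Rmult_le_compat_r; [apply Rmult_le_pos; [|apply pow_le]; lra | apply g_bounded]. }
  destruct (ex_series_le (term 0%nat) dom (Hterm 0%nat) (ex_intro _ _ Hdom)) as [l Hl].
  change C in l. exists (- l)%C. intros y y0 Hy.
  assert (Hsum : forall k, is_series (term k) (- y k)%C).
  { induction k as [|k IH].
    - rewrite y0. replace (- - l)%C with l by ring. exact Hl.
    - replace (- y k)%C with (- y k - term k 0%nat + term k 0%nat)%C in IH by ring.
      apply (is_series_incr_1 (V := C_NormedModule) (term k) (- y k - term k 0%nat)%C),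
        (is_series_scal q) in IH.
      assert (Hshift : forall j, scal q (term k (S j)) = term (S k) j).
      { intros j. change scal with Cmult. unfold term, w.
        rewrite <- plus_n_Sm. simpl. field. exact q_neq0. }
      assert (Hval : scal q (- y k - term k 0%nat)%C = (- y (S k))%C).
      { change scal with Cmult. rewrite Hy. unfold term, w.
        rewrite Nat.add_0_r. simpl. field. exact q_neq0. }
      rewrite <- Hval. exact (is_series_ext _ _ _ Hshift IH). }
  intros k. rewrite <- Cmod_opp.
  exact (is_series_norm_le _ _ _ _ (Hsum k) Hdom (Hterm k)).
Qed.

Lemma affine_rec_bounded :
  Cmod q <> 1 -> exists c, forall y, y 0%nat = c -> affine_rec y ->
  forall k, Cmod (y k) <= B / Rabs (1 - Cmod q).
Proof.
  intros Hq. destruct (Rlt_or_le (Cmod q) 1) as [Hlt | Hge].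
  - exists 0%C. intros y y0 Hy k. rewrite Rabs_pos_eq by lra.
    exact (affine_rec_bounded_contractive y Hlt y0 Hy k).
  - destruct affine_rec_bounded_expansive as [c Hc]; [lra|].
    exists c. intros y y0 Hy k. rewrite Rabs_minus_sym, Rabs_pos_eq by lra.
    exact (Hc y y0 Hy k).
Qed.

End AffineRecurrence.

Fixpoint affine_orbit (a f : nat -> C) (c : C) (n : nat) : C :=
  match n with
  | O => c
  | S m => (a m * affine_orbit a f c m + f m)%C
  end.

Section PeriodicRecurrence.

Variables a0 a1 : C.

Lemma p_per_even k : p_per a0 a1 (2 * k) = a0.
Proof. unfold p_per. rewrite Nat.even_mul. reflexivity. Qed.

Lemma p_per_odd k : p_per a0 a1 (S (2 * k)) = a1.
Proof. unfold p_per. rewrite Nat.even_succ, <- Nat.negb_even, Nat.even_mul. reflexivity. Qed.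

Lemma p_per_rec_even_step (f e : nat -> C) :
  (forall n, e (S n) = p_per a0 a1 n * e n + f n)%C ->
  affine_rec (a0 * a1) (fun k => a1 * f (2 * k)%nat + f (S (2 * k)))%C (fun k => e (2 * k)%nat).
Proof.
  intros He k. replace (2 * S k)%nat with (S (S (2 * k))) by lia.
  rewrite He, He, p_per_even, p_per_odd. ring.
Qed.

Section Orbit.

Variables (f e : nat -> C) (d : R).
Hypothesis f_bounded : forall n, Cmod (f n) <= d.
Hypothesis e_rec : forall n, (e (S n) = p_per a0 a1 n * e n + f n)%C.
Hypothesis r_neq1 : Cmod a0 * Cmod a1 <> 1.

Let D := Rabs (1 - Cmod a0 * Cmod a1).

Lemma p_per_rec_odd_le :
  (forall k, Cmod (e (2 * k)%nat) <= (1 + Cmod a1) * d / D) ->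
  forall k, Cmod (e (S (2 * k))) <= (1 + Cmod a0) * d / D.
Proof.
  intros Heven k.
  set (A0 := Cmod a0) in *. set (A1 := Cmod a1) in *. set (E := (1 + A1) * d / D) in *.
  assert (HA0 : 0 <= A0) by apply Cmod_ge_0.
  assert (HA1 : 0 <= A1) by apply Cmod_ge_0.
  (* For |a0 a1| < 1 estimate e(2k+1) forward from e(2k), otherwise backward from e(2k+2). *)
  destruct (Rlt_or_le (A0 * A1) 1) as [Hlt | Hge].
  - replace ((1 + A0) * d / D) with (A0 * E + d)
      by (unfold E, D; fold A0 A1; rewrite Rabs_pos_eq by lra; field; lra).
    rewrite e_rec, p_per_even. eapply Rle_trans; [apply Cmod_triangle|]. rewrite Cmod_mult.
    pose proof (Rmult_le_compat_l A0 _ _ HA0 (Heven k)). pose proof (f_bounded (2 * k)%nat).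
    fold A0. lra.
  - assert (HA1p : 0 < A1) by (destruct HA1 as [|E1]; [auto | rewrite <- E1 in Hge; lra]).
    apply (Rmult_le_reg_l A1); [exact HA1p|].
    replace (A1 * ((1 + A0) * d / D)) with (E + d)
      by (unfold E, D; fold A0 A1; rewrite Rabs_minus_sym, Rabs_pos_eq by lra; field; lra).
    replace (A1 * Cmod (e (S (2 * k)))) with (Cmod (e (2 * S k)%nat - f (S (2 * k)))%C).
    + eapply Rle_trans; [apply Cmod_triangle|]. rewrite Cmod_opp.
      pose proof (Heven (S k)). pose proof (f_bounded (S (2 * k))). lra.
    + replace (2 * S k)%nat with (S (S (2 * k))) by lia.
      rewrite e_rec, p_per_odd. unfold A1. rewrite <- Cmod_mult. f_equal. ring.
Qed.

End Orbit.

Lemma p_per_rec_bounded (f : nat -> C) (d : R) :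
  (forall n, Cmod (f n) <= d) -> Cmod a0 * Cmod a1 <> 1 ->
  exists e : nat -> C, (forall n, e (S n) = p_per a0 a1 n * e n + f n)%C /\
  forall n, Cmod (e n) <= d * Rmax ((1 + Cmod a0) / Rabs (1 - Cmod a0 * Cmod a1))
                                   ((1 + Cmod a1) / Rabs (1 - Cmod a0 * Cmod a1)).
Proof.
  intros Hf Hr.
  set (D := Rabs (1 - Cmod a0 * Cmod a1)).
  assert (Hd : 0 <= d) by (eapply Rle_trans; [apply Cmod_ge_0 | apply (Hf 0%nat)]).
  assert (HD : 0 < D) by (apply Rabs_pos_lt; lra).
  set (g k := (a1 * f (2 * k)%nat + f (S (2 * k)))%C).
  assert (Hg : forall k, Cmod (g k) <= (1 + Cmod a1) * d).
  { intros k. unfold g. eapply Rle_trans; [apply Cmod_triangle|]. rewrite Cmod_mult.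
    pose proof (Rmult_le_compat_l _ _ _ (Cmod_ge_0 a1) (Hf (2 * k)%nat)).
    pose proof (Hf (S (2 * k))). lra. }
  destruct (affine_rec_bounded (a0 * a1) g _ Hg) as [c Hc].
  { rewrite Cmod_mult. exact Hr. }
  rewrite Cmod_mult in Hc.
  set (e := affine_orbit (p_per a0 a1) f c).
  assert (He : forall n, (e (S n) = p_per a0 a1 n * e n + f n)%C) by reflexivity.
  assert (Heven : forall k, Cmod (e (2 * k)%nat) <= (1 + Cmod a1) * d / D)
    by exact (Hc (fun k => e (2 * k)%nat) eq_refl (p_per_rec_even_step f e He)).
  pose proof (p_per_rec_odd_le f e d Hf He Hr Heven) as Hodd.
  exists e. split; [exact He|].
  intros n. destruct (Nat.Even_or_Odd n) as [[k ->] | [k ->]].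
  - apply Rle_trans with (d * ((1 + Cmod a1) / D)).
    + replace (d * ((1 + Cmod a1) / D)) with ((1 + Cmod a1) * d / D) by (field; lra).
      apply Heven.
    + apply Rmult_le_compat_l; [exact Hd | apply Rmax_r].
  - rewrite Nat.add_1_r. apply Rle_trans with (d * ((1 + Cmod a0) / D)).
    + replace (d * ((1 + Cmod a0) / D)) with ((1 + Cmod a0) * d / D) by (field; lra).
      apply Hodd.
    + apply Rmult_le_compat_l; [exact Hd | apply Rmax_l].
Qed.

Lemma p_per_rec_bounded_zero (x : nat -> C) :
  1 < Cmod a0 * Cmod a1 -> (forall n, x (S n) = p_per a0 a1 n * x n)%C ->
  (exists M, forall n, Cmod (x n) <= M) -> forall n, x n = 0%C.
Proof.
  intros Hr Hx [M HM].
  set (r := Cmod a0 * Cmod a1) in *.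
  assert (Hx' : forall n, (x (S n) = p_per a0 a1 n * x n + 0)%C)
    by (intros n; rewrite Hx; ring).
  assert (Hgrowth : forall k, Cmod (x (2 * k)%nat) = r ^ k * Cmod (x 0%nat)).
  { induction k as [|k IH]; [simpl; ring|].
    pose proof (p_per_rec_even_step (fun _ => 0%C) x Hx' k) as Hk. cbv beta in Hk.
    replace (x (2 * S k)%nat) with (a0 * a1 * x (2 * k)%nat)%C by (rewrite Hk; ring).
    rewrite !Cmod_mult, IH. fold r. simpl. ring. }
  assert (Hx0 : x 0%nat = 0%C).
  { apply Cmod_eq_0. destruct (Cmod_ge_0 (x 0%nat)) as [Hpos | Hz]; [exfalso | auto].
    destruct (Pow_x_infinity r ltac:(rewrite Rabs_pos_eq; lra) ((M + 1) / Cmod (x 0%nat)))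
      as [N HN].
    pose proof (HN N (le_n N)) as HrN. rewrite Rabs_pos_eq in HrN by (apply pow_le; lra).
    apply Rge_le, (Rmult_le_compat_r (Cmod (x 0%nat))) in HrN; [|lra].
    replace ((M + 1) / Cmod (x 0%nat) * Cmod (x 0%nat)) with (M + 1) in HrN by (field; lra).
    pose proof (HM (2 * N)%nat) as HMN. rewrite Hgrowth in HMN. lra. }
  induction n as [|n IH]; [exact Hx0|]. rewrite Hx, IH. ring.
Qed.

End PeriodicRecurrence.

Lemma RtoC_neq0 (x : R) : x <> 0 -> RtoC x <> 0%C.
Proof. intros Hx E. apply Hx. exact (f_equal Re E). Qed.

Lemma Cmod_div_pos (z : C) (h : R) : 0 < h -> Cmod (z / h) = Cmod z / h.
Proof.
  intros Hh. rewrite Cmod_div by (apply RtoC_neq0; lra).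
  rewrite Cmod_R, Rabs_pos_eq by lra. reflexivity.
Qed.

Lemma delta_h_residual (h : R) (p x : nat -> C) (n : nat) : h <> 0 ->
  (delta_h h x n - p n * x n)%C = ((x (S n) - (1 + h * p n) * x n) / h)%C.
Proof. intros Hh. unfold delta_h. field. apply RtoC_neq0, Hh. Qed.

Lemma delta_h_solution (h : R) (p x : nat -> C) (n : nat) : h <> 0 ->
  (delta_h h x n - p n * x n = 0)%C <-> x (S n) = ((1 + h * p n) * x n)%C.
Proof.
  intros Hh. rewrite delta_h_residual by exact Hh. split; intros E.
  - apply Ceq_minus.
    replace (x (S n) - (1 + h * p n) * x n)%C
      with ((x (S n) - (1 + h * p n) * x n) / h * h)%C by (field; apply RtoC_neq0, Hh).
    rewrite E. ring.
  - rewrite E. field. apply RtoC_neq0, Hh.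
Qed.

Lemma p_per_affine (h : R) (p0 p1 : C) (n : nat) :
  (1 + h * p_per p0 p1 n)%C = p_per (1 + h * p0) (1 + h * p1) n.
Proof. unfold p_per. destruct (Nat.even n); reflexivity. Qed.

Fixpoint phase (a : nat -> C) (n : nat) : C :=
  match n with
  | O => 1%C
  | S m => (a m / Cmod (a m) * phase a m)%C
  end.

Section Phase.

Variable a : nat -> C.
Hypothesis a_neq0 : forall n, a n <> 0%C.

Lemma Cmod_phase n : Cmod (phase a n) = 1.
Proof.
  induction n as [|n IH]; simpl phase; [apply Cmod_1|].
  assert (Ha : 0 < Cmod (a n)) by (apply Cmod_gt_0, a_neq0).
  rewrite !Cmod_mult, Cmod_div_pos, IH by exact Ha. field. lra.
Qed.

Lemma phase_modulation_residual (s : nat -> R) n :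
  (s (S n) * phase a (S n) - a n * (s n * phase a n))%C
  = (RtoC (s (S n) - Cmod (a n) * s n) * phase a (S n))%C.
Proof.
  assert (Ha : RtoC (Cmod (a n)) <> 0%C)
    by (apply RtoC_neq0; intros E; apply (a_neq0 n), Cmod_eq_0, E).
  rewrite RtoC_minus, RtoC_mult. simpl phase. field. exact Ha.
Qed.

Lemma Cmod_phase_modulation_residual (s : nat -> R) n :
  Cmod (s (S n) * phase a (S n) - a n * (s n * phase a n))%C
  = Rabs (s (S n) - Cmod (a n) * s n).
Proof. rewrite phase_modulation_residual, Cmod_mult, Cmod_phase, Cmod_R. ring. Qed.

End Phase.

Lemma ulam_constant_ge_bounded_perturbation (h : R) (p : nat -> C) (K M : R) (phi : nat -> C) :
  ulam_constant h p K ->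
  (forall x : nat -> C, (forall n, delta_h h x n - p n * x n = 0)%C ->
     (exists M', forall n, Cmod (x n) <= M') -> forall n, x n = 0%C) ->
  (forall n, Cmod (delta_h h phi n - p n * phi n)%C <= 1) ->
  (forall n, Cmod (phi n) <= M) ->
  forall n, Cmod (phi n) <= K.
Proof.
  intros [_ HK] Hzero Hphi HM.
  destruct (HK 1 Rlt_0_1 phi Hphi) as [x [Hx Hx_near]].
  assert (Hx0 : forall n, x n = 0%C).
  { apply (Hzero x Hx). exists (M + K). intros n.
    replace (x n) with (phi n - (phi n - x n))%C by ring.
    eapply Rle_trans; [apply Cmod_triangle|]. rewrite Cmod_opp.
    pose proof (HM n). pose proof (Hx_near n). lra. }
  intros n. replace (phi n) with (phi n - x n)%C by (rewrite Hx0; ring).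
  rewrite <- (Rmult_1_r K). apply Hx_near.
Qed.

Lemma ulam_constant_K0 (h : R) (p0 p1 : C) :
  0 < h -> Cmod (1 + h * p0)%C * Cmod (1 + h * p1)%C <> 1 ->
  ulam_constant h (p_per p0 p1) (K0 h p0 p1).
Proof.
  intros Hh Hr.
  set (a := p_per (1 + h * p0)%C (1 + h * p1)%C).
  split.
  - unfold K0. apply Rmult_lt_0_compat; [exact Hh|].
    eapply Rlt_le_trans; [|apply Rmax_l]. apply Rdiv_lt_0_compat.
    + pose proof (Cmod_ge_0 (1 + h * p0)%C). lra.
    + apply Rabs_pos_lt. lra.
  - intros eps Heps phi Hphi.
    set (f n := (phi (S n) - a n * phi n)%C).
    assert (Hf : forall n, Cmod (f n) <= h * eps).
    { intros n. specialize (Hphi n).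
      rewrite delta_h_residual, Cmod_div_pos, p_per_affine in Hphi by lra.
      rewrite Rmult_comm. apply Rle_div_l; [exact Hh | exact Hphi]. }
    destruct (p_per_rec_bounded _ _ f (h * eps) Hf Hr) as [e [He Hbound]].
    exists (fun n => phi n - e n)%C. split.
    + intros n. apply delta_h_solution; [lra|].
      rewrite p_per_affine, He. unfold f, a. ring.
    + intros n. replace (phi n - (phi n - e n))%C with (e n) by ring.
      eapply Rle_trans; [apply Hbound|]. right. unfold K0; cbv zeta. ring.
Qed.

Lemma K0_le_ulam_constant (h : R) (p0 p1 : C) (K : R) :
  0 < h -> 1 < Cmod (1 + h * p0)%C * Cmod (1 + h * p1)%C ->
  ulam_constant h (p_per p0 p1) K -> K0 h p0 p1 <= K.
Proof.
  intros Hh Hr HK.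
  set (a0 := (1 + h * p0)%C) in *. set (a1 := (1 + h * p1)%C) in *.
  set (A0 := Cmod a0) in *. set (A1 := Cmod a1) in *.
  set (a := p_per a0 a1).
  assert (HA0 : 0 < A0).
  { destruct (Cmod_ge_0 a0) as [|E]; [assumption|]. fold A0 in E. rewrite <- E in Hr. lra. }
  assert (HA1 : 0 < A1).
  { destruct (Cmod_ge_0 a1) as [|E]; [assumption|]. fold A1 in E. rewrite <- E in Hr. lra. }
  assert (Ha : forall n, a n <> 0%C).
  { intros n E. assert (Han : Cmod (a n) = 0) by (rewrite E; apply Cmod_0).
    unfold a, p_per in Han. destruct (Nat.even n); fold A0 A1 in Han; lra. }
  set (L0 := h * (1 + A1) / (A0 * A1 - 1)). set (L1 := h * (1 + A0) / (A0 * A1 - 1)).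
  set (s n := if Nat.even n then L0 else L1).
  assert (Hs : forall n, s (S n) - Cmod (a n) * s n = - h).
  { intros n. unfold s, a, p_per. rewrite Nat.even_succ, <- Nat.negb_even.
    destruct (Nat.even n); simpl; fold A0 A1; unfold L0, L1; field; lra. }
  assert (HL0 : 0 < L0) by (apply Rdiv_lt_0_compat; nra).
  assert (HL1 : 0 < L1) by (apply Rdiv_lt_0_compat; nra).
  assert (Hs_pos : forall n, 0 <= s n) by (intros n; unfold s; destruct (Nat.even n); lra).
  set (phi n := (s n * phase a n)%C).
  assert (Cmod_phi : forall n, Cmod (phi n) = s n).
  { intros n. unfold phi. rewrite Cmod_mult, Cmod_phase, Cmod_R, Rabs_pos_eq by auto. ring. }
  assert (HsK : forall n, s n <= K).
  { intros n. rewrite <- Cmod_phi.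
    apply (ulam_constant_ge_bounded_perturbation h (p_per p0 p1) K (L0 + L1)).
    - exact HK.
    - intros x Hx. apply (p_per_rec_bounded_zero a0 a1 x Hr). intros m.
      unfold a0, a1. rewrite <- p_per_affine. apply delta_h_solution; [lra | apply Hx].
    - intros m. rewrite delta_h_residual, Cmod_div_pos, p_per_affine by lra. fold a.
      unfold phi. rewrite Cmod_phase_modulation_residual, Hs, Rabs_Ropp, Rabs_pos_eq
        by (exact Ha || lra).
      right. field. lra.
    - intros m. rewrite Cmod_phi. unfold s. destruct (Nat.even m); lra. }
  unfold K0; cbv zeta. fold a0 a1 A0 A1.
  rewrite Rabs_minus_sym, Rabs_pos_eq, <- RmaxRmult by lra.
  apply Rmax_lub.
  - replace (h * ((1 + A0) / (A0 * A1 - 1))) with (s 1%nat) by (unfold s, L1; simpl; field; lra).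
    apply HsK.
  - replace (h * ((1 + A1) / (A0 * A1 - 1))) with (s 0%nat) by (unfold s, L0; simpl; field; lra).
    apply HsK.
Qed.

Theorem theorem2p3 (h : R) (p0 p1 : C)
  (hh : 0 < h)
  (hp0 : p0 <> RtoC (- (1 / h)))
  (hp1 : p1 <> RtoC (- (1 / h)))
  (hne : p0 <> p1)
  (hpos : 0 < Cmod (Cplus (RtoC 1) (Cmult (RtoC h) p0))
              * Cmod (Cplus (RtoC 1) (Cmult (RtoC h) p1)))
  (hne1 : Cmod (Cplus (RtoC 1) (Cmult (RtoC h) p0))
          * Cmod (Cplus (RtoC 1) (Cmult (RtoC h) p1)) <> 1) :
  ulam_constant h (p_per p0 p1) (K0 h p0 p1) /\
  (1 < Cmod (Cplus (RtoC 1) (Cmult (RtoC h) p0))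
       * Cmod (Cplus (RtoC 1) (Cmult (RtoC h) p1)) ->
   forall K : R, 0 < K -> K < K0 h p0 p1 ->
     ~ ulam_constant h (p_per p0 p1) K).
Proof.
  split.
  - exact (ulam_constant_K0 h p0 p1 hh hne1).
  - intros hr K _ hK hulam.
    pose proof (K0_le_ulam_constant h p0 p1 K hh hr hulam). lra.
Qed.
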